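(* Let $Z$ be a Hilbert space and $\alpha>0$. Then the interior of $\mathcal L_{\mathrm{sa},\alpha}(Z,Z^* )$, taken in the Banach space $\mathcal L_{\mathrm{sa}}(Z,Z^* )$ equipped with the operator norm, is $$\big(\mathcal L_{\mathrm{sa},\alpha}(Z,Z^* )\big)^\circ=\bigcup_{\epsilon>0}\mathcal L_{\mathrm{sa},\alpha+\epsilon}(Z,Z^* ).$$
   Context: For a Hilbert space $Z$, identify $Z^{**}$ with $Z$ and set $\mathcal L_{\mathrm{sa}}(Z,Z^* )=\{G\in\mathcal L(Z,Z^* ): G^*=G\}$; this is a closed subspace of $\mathcal L(Z,Z^* )$, hence a Banach space with the operator norm. For $\alpha>0$ let $\mathcal L_{\mathrm{sa},\alpha}(Z,Z^* )=\{G\in\mathcal L_{\mathrm{sa}}(Z,Z^* ): \langle Gz,z\rangle\ge\alpha\|z\|_Z^2 \text{ for all } z\in Z\}$, where $\langle\cdot,\cdot\rangle$ is the duality pairing between $Z^*$ and $Z$. *)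

From HB Require Import structures.
From mathcomp Require Import all_boot all_order all_algebra.
From mathcomp Require Import all_classical all_reals all_analysis.
Set Implicit Arguments. Unset Strict Implicit. Unset Printing Implicit Defensive.
Import Order.TTheory GRing.Theory Num.Theory.
Import numFieldNormedType.Exports.
Local Open Scope classical_set_scope.
Local Open Scope ring_scope.

Section Defs.
Context {R : realType} {Z : normedModType R}.

Definition is_inner_product (ip : Z -> Z -> R) : Prop :=
  [/\ forall z w, ip z w = ip w z,
      forall a z1 z2 w, ip (a *: z1 + z2) w = a * ip z1 w + ip z2 w &
      forall z, ip z z = `|z| ^+ 2].

Definition lin_fun (f : Z -> R) : Prop :=
  forall a z1 z2, f (a *: z1 + z2) = a * f z1 + f z2.

Definition dual_norm (f : Z -> R) : R :=
  sup [set `|f w| | w in [set w : Z | `|w| <= 1]].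

(* An operator G : Z -> Z^* is represented by the map z |-> (w |-> <G z, w>). *)
Definition Lop (G : Z -> Z -> R) : Prop :=
  [/\ forall z, lin_fun (G z),
      forall a z1 z2 w, G (a *: z1 + z2) w = a * G z1 w + G z2 w &
      exists C : R, forall z w, `|G z w| <= C * `|z| * `|w|].

Definition op_norm (G : Z -> Z -> R) : R :=
  sup [set dual_norm (G z) | z in [set z : Z | `|z| <= 1]].

(* G^* : Z^{**} = Z -> Z^*,  <G^* z, w> = <G w, z>;  self-adjoint: G^* = G. *)
Definition adjoint (G : Z -> Z -> R) : Z -> Z -> R := fun z w => G w z.

Definition Lsa : set (Z -> Z -> R) := [set G | Lop G /\ adjoint G = G].

Definition Lsa_alpha (alpha : R) : set (Z -> Z -> R) :=
  [set G | Lsa G /\ forall z : Z, G z z >= alpha * `|z| ^+ 2].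

Definition interior_Lsa (S : set (Z -> Z -> R)) : set (Z -> Z -> R) :=
  [set G | Lsa G /\ exists2 r : R, 0 < r &
     forall H, Lsa H -> op_norm (fun z w => H z w - G z w) < r -> S H].

End Defs.

(** If [G] is coercive with constant
    [alpha + e] and [|H - G| <= e], then
    [<H z, z> >= <G z, z> - |H - G| |z|^2 >= alpha |z|^2].  Conversely, if the
    ball of radius [r] around [G] lies in [Lsa_alpha alpha], so does
    [G - (r/2) <., .>] (at distance [r/2] by Cauchy-Schwarz), and this says
    that [G] is coercive with constant [alpha + r/2]. *)

From HB Require Import structures.
From mathcomp Require Import all_boot all_order all_algebra.
From mathcomp Require Import all_classical all_reals all_analysis.
From mathcomp Require Import ring lra.
Import Order.TTheory GRing.Theory Num.Theory.
Import numFieldNormedType.Exports.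
Local Open Scope classical_set_scope.
Local Open Scope ring_scope.

Section BoundedBilinearForms.
Context {R : realType} {Z : normedModType R}.
Implicit Types (f : Z -> R) (D G H : Z -> Z -> R) (z w : Z).

Lemma lin_fun0 {f} : lin_fun f -> f 0 = 0.
Proof. by move=> hf; have := hf 1 0 0; rewrite scale1r addr0 mul1r; lra. Qed.

Lemma lin_funZ {f} : lin_fun f -> forall a z, f (a *: z) = a * f z.
Proof. by move=> hf a z; have := hf a z 0; rewrite addr0 lin_fun0 // addr0. Qed.

Definition is_bilinear D :=
  (forall z, lin_fun (D z)) /\ (forall w, lin_fun (D^~ w)).

Lemma Lop_bilinear {G} : Lop G -> is_bilinear G.
Proof. by case=> hG1 hG2 _; split=> // w a z1 z2; exact: hG2. Qed.

Lemma bilinear_le_normM {D B} : is_bilinear D ->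
  (forall z w, `|z| <= 1 -> `|w| <= 1 -> `|D z w| <= B) ->
  forall z w, `|D z w| <= B * `|z| * `|w|.
Proof.
move=> [D1 D2] hB z w.
have [->|z0] := eqVneq z 0.
  by rewrite (lin_fun0 (D2 w)) !normr0 mulr0 mul0r.
have [->|w0] := eqVneq w 0.
  by rewrite (lin_fun0 (D1 z)) !normr0 mulr0.
have unit_normalize (x : Z) : x != 0 -> exists2 u, x = `|x| *: u & `|u| = 1.
  move=> x0; exists (`|x|^-1 *: x).
    by rewrite scalerA mulfV ?normr_eq0 ?scale1r.
  by rewrite normrZ normfV normr_id mulVf ?normr_eq0.
have [[u ez nu] [v ew nv]] := (unit_normalize z z0, unit_normalize w w0).
have -> : D z w = `|w| * (`|z| * D u v).
  by rewrite {1}ez {1}ew (lin_funZ (D1 _)) (lin_funZ (D2 _)).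
rewrite !normrM !normr_id [X in _ <= X]mulrC [B * _]mulrC.
by rewrite ler_wpM2l // ler_wpM2l // hB ?nu ?nv.
Qed.

Lemma Lop_bounded_ball G : Lop G ->
  exists C, forall z w, `|z| <= 1 -> `|w| <= 1 -> `|G z w| <= C.
Proof.
case=> _ _ [C hC]; exists `|C| => z w hz hw; apply: le_trans (hC z w) _.
rewrite -mulrA; apply: le_trans (ler_norm _) _; rewrite normrM ler_piMr //.
by rewrite normrM !normr_id mulr_ile1.
Qed.

Lemma dual_norm_le f B :
  (forall w, `|w| <= 1 -> `|f w| <= B) -> dual_norm f <= B.
Proof.
move=> hB; apply: ge_sup; first by exists `|f 0|, 0; rewrite //= normr0.
by move=> _ [w hw <-]; exact: hB.
Qed.

Lemma le_dual_norm {f B w} : (forall w', `|w'| <= 1 -> `|f w'| <= B) ->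
  `|w| <= 1 -> `|f w| <= dual_norm f.
Proof.
move=> hB hw; apply: ub_le_sup; last by exists w.
by exists B => _ [w' hw' <-]; exact: hB.
Qed.

Lemma op_norm_le G B :
  (forall z w, `|z| <= 1 -> `|w| <= 1 -> `|G z w| <= B) -> op_norm G <= B.
Proof.
move=> hB; apply: ge_sup.
  by exists (dual_norm (G 0)), 0; rewrite //= normr0.
by move=> _ [z hz <-]; apply: dual_norm_le => w; exact: hB z w hz.
Qed.

Lemma Lop_le_op_norm_ball G z w : Lop G ->
  `|z| <= 1 -> `|w| <= 1 -> `|G z w| <= op_norm G.
Proof.
move=> /Lop_bounded_ball[C hC] hz hw.
apply: le_trans (le_dual_norm (fun w' => hC z w' hz) hw) _.
apply: ub_le_sup; last by exists z.
by exists C => _ [z' hz' <-]; apply: dual_norm_le => w'; exact: hC z' w' hz'.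
Qed.

Lemma Lop_le_op_norm {G} z w : Lop G -> `|G z w| <= op_norm G * `|z| * `|w|.
Proof.
move=> hG; apply: (bilinear_le_normM (Lop_bilinear hG)) => z' w'.
exact: Lop_le_op_norm_ball.
Qed.

Lemma LopB {G H} : Lop G -> Lop H -> Lop (fun z w => G z w - H z w).
Proof.
move=> hG hH; have [G1 G2] := Lop_bilinear hG; have [H1 H2] := Lop_bilinear hH.
case: hG hH => _ _ [CG hCG] [_ _ [CH hCH]]; split.
- by move=> z a z1 z2; rewrite G1 H1; ring.
- by move=> a z1 z2 w; rewrite G2 H2; ring.
- exists (CG + CH) => z w; apply: le_trans (ler_normB _ _) _.
  by rewrite !mulrDl lerD.
Qed.

Lemma LopZ c {G} : Lop G -> Lop (fun z w => c * G z w).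
Proof.
case=> G1 G2 [C hC]; split.
- by move=> z a z1 z2; rewrite G1; ring.
- by move=> a z1 z2 w; rewrite G2; ring.
- exists (`|c| * C) => z w; rewrite normrM -!mulrA ler_wpM2l // mulrA.
  exact: hC.
Qed.

Lemma Lsa_alpha_perturb (alpha e : R) G H : Lsa_alpha (alpha + e) G -> Lsa H ->
  op_norm (fun z w => H z w - G z w) <= e -> Lsa_alpha alpha H.
Proof.
move=> [[hG _] hGa] hH hdist; split=> // z.
have := Lop_le_op_norm z z (LopB hH.1 hG); rewrite ler_norml => /andP[hlow _].
have : op_norm (fun z w => H z w - G z w) * `|z| * `|z| <= e * `|z| ^+ 2.
  by rewrite -mulrA -expr2 ler_wpM2r ?sqr_ge0.
move: (hGa z) hlow; rewrite -mulrA -expr2 mulrDl.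
move: (op_norm _) => N; nra.
Qed.

End BoundedBilinearForms.

Section InnerProduct.
Context {R : realType} {Z : normedModType R} (ip : Z -> Z -> R).
Hypothesis hip : is_inner_product ip.

Lemma inner_product_bilinear : is_bilinear ip.
Proof.
case: hip => ipC ipL _; split=> [z a z1 z2|w a z1 z2]; last exact: ipL.
by rewrite ipC ipL (ipC z1) (ipC z2).
Qed.

Lemma inner_product_expand a u v :
  ip (a *: u + v) (a *: u + v) = a ^+ 2 * ip u u + 2 * a * ip u v + ip v v.
Proof.
case: hip => ipC ipL _.
by rewrite ipL (ipC u) (ipC v (a *: u + v)) !ipL (ipC v u); ring.
Qed.

Lemma inner_product_le_normM z w : `|ip z w| <= `|z| * `|w|.
Proof.
rewrite -[`|z|]mul1r; apply: bilinear_le_normM inner_product_bilinear _ z w.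
move=> u v hu hv; case: hip => _ _ ipN.
have sq_ge0 a : 0 <= a ^+ 2 * `|u| ^+ 2 + 2 * a * ip u v + `|v| ^+ 2.
  by rewrite -!ipN -inner_product_expand ipN sqr_ge0.
have u2 : `|u| ^+ 2 <= 1 by rewrite expr_le1.
have v2 : `|v| ^+ 2 <= 1 by rewrite expr_le1.
have := sq_ge0 1; have := sq_ge0 (-1); rewrite sqrrN expr1n ler_norml.
move=> ? ?; apply/andP; split; lra.
Qed.

Lemma inner_product_Lop : Lop ip.
Proof.
have [ip1 ip2] := inner_product_bilinear.
split=> // [a z1 z2 w|]; first exact: ip2.
by exists 1 => z w; rewrite mul1r inner_product_le_normM.
Qed.

Lemma Lsa_shift (G : Z -> Z -> R) c :
  Lsa G -> Lsa (fun z w => G z w - c * ip z w).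
Proof.
case=> hG hGsym; split; first exact: LopB hG (LopZ c inner_product_Lop).
case: hip => ipC _ _; apply/funext => z; apply/funext => w.
by rewrite /adjoint /= (ipC w z) -[in RHS]hGsym.
Qed.

Lemma interior_Lsa_alpha_margin (alpha : R) (G : Z -> Z -> R) :
  interior_Lsa (Lsa_alpha alpha) G ->
  exists2 eps, 0 < eps & Lsa_alpha (alpha + eps) G.
Proof.
move=> [hG [r r0 hball]]; have c0 : 0 < r / 2 by rewrite divr_gt0.
have half_lt : r / 2 < r by rewrite ltr_pdivrMr // ltr_pMr // ltr1n.
have hdist : op_norm (fun z w => (G z w - r / 2 * ip z w) - G z w) < r.
  apply: le_lt_trans half_lt; apply: op_norm_le => z w hz hw.
  rewrite addrAC subrr add0r normrN normrM gtr0_norm // ler_piMr ?(ltW c0) //.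
  by apply: le_trans (inner_product_le_normM z w) _; rewrite mulr_ile1.
have [_ hshift] := hball _ (Lsa_shift _ (r / 2) hG) hdist.
exists (r / 2) => //; split=> // z; have := hshift z.
case: hip => _ _ ipN; rewrite ipN mulrDl; lra.
Qed.

End InnerProduct.

Theorem lemma2p3 (R : realType) (Z : completeNormedModType R)
    (ip : Z -> Z -> R) (hip : is_inner_product ip) (alpha : R) (halpha : 0 < alpha) :
  @interior_Lsa R Z (@Lsa_alpha R Z alpha) =
  \bigcup_(eps in [set e : R | 0 < e]) @Lsa_alpha R Z (alpha + eps).
Proof.
apply/seteqP; split=> G.
- by case/(interior_Lsa_alpha_margin _ hip) => e e0 hG; exists e.
- case=> e /= e0 hG; split; first exact: hG.1.
  by exists e => // H hH /ltW; exact: Lsa_alpha_perturb hG hH.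
Qed.
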